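(* Consider an $N$-player quadratic game with step sizes $\gamma_1,\ldots,\gamma_N>0$, associated block matrix $W$, and disturbed gradient-based learning dynamics as described in the context, in which player $i$'s gradient is corrupted by an arbitrary disturbance. Then a player $j\neq i$ is disturbance decoupled from player $i$ if and only if $$\sum_{p\in\mathcal{P}^k_{ij}}\ \prod_{l=0}^{k-1}W_{v_{l+1},v_l}=0\quad\text{for all integers } 0<k<n,$$ where for each path $p=(i,v_1,\ldots,v_{k-1},j)\in\mathcal{P}^k_{ij}$ we set $v_0=i$, $v_k=j$, and the product denotes the ordered matrix product $W_{v_k,v_{k-1}}W_{v_{k-1},v_{k-2}}\cdots W_{v_1,v_0}$ (the path weight).
   Context: There are $N$ players, indexed by $[N]=\{1,\ldots,N\}$; player $\ell$ has action $x_\ell\in\mathbb{R}^{n_\ell}$, $n=\sum_{\ell=1}^N n_\ell$, and $x=(x_1,\ldots,x_N)\in\mathbb{R}^n$ is the joint action. A quadratic game has costs $f_\ell(x)=\tfrac12 x_\ell^\top P_\ell x_\ell + x_\ell^\top\big(\sum_{m\neq \ell}P_{\ell m}x_m + r_\ell\big)$ with $P_\ell\in\mathbb{R}^{n_\ell\times n_\ell}$ symmetric, $P_{\ell m}\in\mathbb{R}^{n_\ell\times n_m}$, $r_\ell\in\mathbb{R}^{n_\ell}$. Each player $\ell$ has step size $\gamma_\ell>0$ and updates $x_\ell^{k+1}=x_\ell^k-\gamma_\ell\big(D_\ell f_\ell(x^k)+d_\ell^k\big)$, where $D_\ell f_\ell=\partial f_\ell/\partial x_\ell$ and $d_\ell^k\in\mathbb{R}^{n_\ell}$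 is an arbitrary additive disturbance. Let $W\in\mathbb{R}^{n\times n}$ be the block matrix with blocks $W_{\ell\ell}=I_{n_\ell}-\gamma_\ell P_\ell$ and $W_{\ell m}=-\gamma_\ell P_{\ell m}$ ($\ell\neq m$), $\Gamma=\mathrm{blkdiag}(\gamma_1 I_{n_1},\ldots,\gamma_N I_{n_N})$, $\bar r=(r_1,\ldots,r_N)$. Let $\mathcal{D}_i=\{d\in\mathbb{R}^n : d_m=0\ \forall m\neq i\}$. The uncorrupted and corrupted dynamics are $x^{k+1}=Wx^k-\Gamma\bar r$ and $y^{k+1}=Wy^k-\Gamma\bar r-\Gamma d^k$. Player $j\neq i$ is disturbance decoupled from player $i$ if for every initial $x^0$, with $y^0=x^0$, one has $y_j^k=x_j^k$ for all $k\ge0$ and all disturbance sequences with $d^k\in\mathcal{D}_i$. Game graph: the directed graph on node set $[N]$ with an edge $(m,\ell)$ (from $m$ to $\ell$) of weight $W_{\ell m}\in\mathbb{R}^{n_\ell\times n_m}$ whenever $W_{\ell m}\neq0$, and with a self-loop $(\ell,\ell)$ of weight $W_{\ell\ell}$ at every node. A path $(i,v_1,\ldots,v_{k-1},j)$ is a sequence of $k+1$ nodes in which each consecutive pair is an edge (self-loops allowed); $\mathcal{P}^k_{ij}$ is the set of all such paths starting at $i$ and ending at $j$ with $k+1$ nodes. *)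

From HB Require Import structures.
From mathcomp Require Import all_boot all_order all_algebra.
Set Implicit Arguments. Unset Strict Implicit. Unset Printing Implicit Defensive.
Import Order.TTheory GRing.Theory Num.Theory.
Local Open Scope ring_scope.

Section QuadGame.
Variables (R : realFieldType) (N : nat) (dims : 'I_N -> nat).
(* P l m is the block P_{lm} (for l <> m) and P l l is P_l. *)
Variable P : forall l m : 'I_N, 'M[R]_(dims l, dims m).
Variable r : forall l : 'I_N, 'cV[R]_(dims l).
Variable gamma : 'I_N -> R.

Definition Wblk (l m : 'I_N) : 'M[R]_(dims l, dims m) :=
  \matrix_(a, b) (((l == m) && (val a == val b))%:R) - gamma l *: P l m.

Definition joint := forall l : 'I_N, 'cV[R]_(dims l).

Definition step (x dk : joint) : joint :=
  fun l => \sum_(m < N) Wblk l m *m x m - gamma l *: r l - gamma l *: dk l.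

Fixpoint traj (x0 : joint) (d : nat -> joint) (k : nat) : joint :=
  match k with
  | 0 => x0
  | k'.+1 => step (traj x0 d k') (d k')
  end.

Definition zero_dist : nat -> joint := fun _ l => 0.

Definition supported_on (i : 'I_N) (d : nat -> joint) : Prop :=
  forall k (m : 'I_N), m != i -> d k m = 0.

Definition disturbance_decoupled (i j : 'I_N) : Prop :=
  forall (x0 : joint) (d : nat -> joint), supported_on i d ->
    forall k, traj x0 d k j = traj x0 zero_dist k j.

Definition edge (a b : 'I_N) : bool := (a == b) || (Wblk b a != 0).

(* weight of the path (v, s_1, ..., s_q, j): W_{j s_q} ... W_{s_1 v} *)
Fixpoint pathW (j : 'I_N) (v : 'I_N) (s : seq 'I_N) : 'M[R]_(dims j, dims v) :=
  match s with
  | [::] => Wblk j v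
  | w :: s' => pathW j w s' *m Wblk w v
  end.

End QuadGame.

From HB Require Import structures.
From mathcomp Require Import all_boot all_order all_algebra.
Import Order.TTheory GRing.Theory Num.Theory.
Local Open Scope ring_scope.

(* Stack the players' blocks into one matrix W.  The deviation e^k = y^k - x^k
   caused by the disturbance obeys e^(k+1) = W e^k - Gamma d^k with e^0 = 0,
   so block j of e^k is - sum_s (W^(k-1-s))_(j i) gamma_i d_i^s when d is
   supported on player i.  Hence j is decoupled from i iff every block
   (W^m)_(j i) vanishes (for the converse, feed one unit impulse at time 0).
   Expanding the block product, (W^m)_(j i) is the sum of the weights of the
   walks of length m from i to j, where non-edges contribute zero weight.  By
   Cayley-Hamilton every power of W is a combination of W^0, ..., W^(n-1), and
   (W^0)_(j i) = 0 because j <> i. *)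

Lemma exp_mx_span {F : fieldType} {n : nat} (A : 'M[F]_n) m :
  exists c : 'I_n -> F, A ^+ m = \sum_(l < n) c l *: A ^+ l.
Proof.
case: n A => [|n] A.
  by exists (fun _ => 0); rewrite big_ord0; apply/matrixP => -[].
pose q := 'X^m %% char_poly A.
have size_q : (size q <= n.+1)%N.
  by rewrite -ltnS -(size_char_poly A) ltn_modpN0 // monic_neq0 // char_poly_monic.
exists (fun l => q`_l).
have -> : A ^+ m = horner_mx A q.
  rewrite -[A in LHS](horner_mx_X A) -rmorphXn /= (divp_eq ('X^m) (char_poly A)).
  by rewrite rmorphD rmorphM /= Cayley_Hamilton mulr0 add0r.
rewrite [q in LHS](_ : q = \poly_(l < n.+1) q`_l); last first.
  apply/polyP => l; rewrite coef_poly; case: ltnP => // le_n_l.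
  by rewrite nth_default // (leq_trans size_q le_n_l).
rewrite poly_def rmorph_sum; apply: eq_bigr => l _.
by rewrite -mul_polyC rmorphM /= horner_mx_C rmorphXn /= horner_mx_X -mulmxE mul_scalar_mx.
Qed.

Section BlockMatrices.
Variables (R : pzRingType) (p : nat) (p_ : 'I_p -> nat).
Local Notation sp := (\sum_i p_ i)%N.

Lemma submxblockZ (c : R) (A : 'M[R]_sp) i j :
  submxblock (c *: A) i j = c *: submxblock A i j.
Proof. by apply/matrixP => a b; rewrite !mxE. Qed.

Lemma submxblock_mul (A B : 'M[R]_sp) i k :
  submxblock (A *m B) i k = \sum_j submxblock A i j *m submxblock B j k.
Proof.
rewrite -[A]submxblockK -[B]submxblockK mul_mxblock !mxblockK.
by apply: eq_bigr => j _; rewrite !mxblockK.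
Qed.

Lemma submxcol_mul_mxcol (A : 'M[R]_sp) (X : forall j, 'cV[R]_(p_ j)) i :
  submxcol (A *m \mxcol_j X j) i = \sum_j submxblock A i j *m X j.
Proof.
rewrite -[A]submxblockK mul_mxblock_mxrow mxcolK.
by apply: eq_bigr => j _; rewrite !mxblockK.
Qed.

Lemma submxblock1_neq (i j : 'I_p) : i != j -> submxblock (1 : 'M[R]_sp) i j = 0.
Proof.
move=> /negPf neq_ij; apply/matrixP => a b; rewrite !mxE.
by rewrite -val_eqE tagnat.eq_Rank neq_ij.
Qed.

End BlockMatrices.

Lemma submxblock_exp_eq0 (F : fieldType) p (p_ : 'I_p -> nat)
    (A : 'M[F]_(\sum_i p_ i)) (i j : 'I_p) :
  i != j -> (forall l, (0 < l < \sum_i p_ i)%N -> submxblock (A ^+ l) i j = 0) ->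
  forall m, submxblock (A ^+ m) i j = 0.
Proof.
move=> neq_ij low_eq0 m; have [c ->] := exp_mx_span A m.
rewrite submxblock_sum big1 // => -[[|l] lt_l_n] _ /=.
  by rewrite submxblockZ expr0 submxblock1_neq // scaler0.
by rewrite submxblockZ low_eq0 ?scaler0.
Qed.

Section Game.
Set Implicit Arguments. Unset Strict Implicit.
Variables (R : realFieldType) (N : nat) (dims : 'I_N -> nat)
  (P : forall l m : 'I_N, 'M[R]_(dims l, dims m))
  (r : forall l : 'I_N, 'cV[R]_(dims l)) (gamma : 'I_N -> R).
Local Notation n := (\sum_(l < N) dims l)%N.
Local Notation W := (Wblk P gamma).
Local Notation pathW := (pathW P gamma).
Local Notation traj := (traj P r gamma).

Definition Wmx : 'M[R]_n := \mxblock_(l, m) W l m.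

Lemma pathW_eq0 (j v : 'I_N) (t : seq 'I_N) :
  ~~ path (edge P gamma) v (rcons t j) -> pathW j v t = 0.
Proof.
elim: t v => [|w t IHt] v /=.
  by rewrite andbT /edge negb_or negbK => /andP[_ /eqP].
rewrite negb_and => /orP[|/IHt ->]; last by rewrite mul0mx.
by rewrite /edge negb_or negbK => /andP[_ /eqP ->]; rewrite mulmx0.
Qed.

Lemma Wmx_exp_block (j i : 'I_N) k :
  submxblock (Wmx ^+ k.+1) j i = \sum_(t : k.-tuple 'I_N) pathW j i t.
Proof.
elim: k i => [|k IHk] i.
  rewrite expr1 mxblockK (big_pred1 [tuple]) // => t.
  by apply/esym/eqP/tuple0.
rewrite exprSr -mulmxE submxblock_mul.
rewrite (reindex (fun p : 'I_N * k.-tuple 'I_N => [tuple of p.1 :: p.2])) /=; last first.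
  apply: onW_bij; exists (fun t => (thead t, [tuple of behead t])).
    by case=> v s; rewrite theadE; congr pair; apply: val_inj.
  by move=> t; rewrite [in RHS](tuple_eta t).
rewrite -(pair_bigA _ (fun v (s : k.-tuple 'I_N) => pathW j i (v :: s))) /=.
by apply: eq_bigr => v _; rewrite IHk mulmx_suml mxblockK.
Qed.

Lemma Wmx_exp_block_paths (j i : 'I_N) k :
  submxblock (Wmx ^+ k.+1) j i =
  \sum_(t : k.-tuple 'I_N | path (edge P gamma) i (rcons t j)) pathW j i t.
Proof.
rewrite Wmx_exp_block [RHS]big_mkcond; apply: eq_bigr => t _.
by case: ifP => // /negbT /pathW_eq0.
Qed.

Definition deviation (x0 : joint R dims) (d : nat -> joint R dims) k : 'cV[R]_n :=
  \mxcol_l (traj x0 d k l - traj x0 (@zero_dist R N dims) k l).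

Definition scaled_dist (d : nat -> joint R dims) s : 'cV[R]_n :=
  \mxcol_l (gamma l *: d s l).

Lemma deviationS x0 d k :
  deviation x0 d k.+1 = Wmx *m deviation x0 d k - scaled_dist d k.
Proof.
apply/mxcolP => l; rewrite submxcolB submxcol_mul_mxcol !mxcolK /= /step /zero_dist.
under [in RHS]eq_bigr do rewrite mxblockK mulmxBr.
by rewrite scaler0 subr0 sumrB opprB addrAC addrA subrK addrAC.
Qed.

Lemma deviation_sum x0 d k :
  deviation x0 d k = - \sum_(s < k) Wmx ^+ (k - s.+1) *m scaled_dist d s.
Proof.
elim: k => [|k IHk].
  by rewrite big_ord0 oppr0; apply/mxcolP => l; rewrite mxcolK subrr submxcol0.
rewrite deviationS IHk mulmxN mulmx_sumr big_ord_recr /= subnn expr0 mul1mx opprD.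
congr (- _ - _); apply: eq_bigr => s _.
by rewrite mulmxA mulmxE -exprS subSS subnSK.
Qed.

Lemma deviation_block x0 d k j :
  traj x0 d k j - traj x0 (@zero_dist R N dims) k j =
  - \sum_(s < k) \sum_l submxblock (Wmx ^+ (k - s.+1)) j l *m (gamma l *: d s l).
Proof.
rewrite -[LHS](mxcolK (fun l => traj x0 d k l - traj x0 (@zero_dist R N dims) k l)).
rewrite -/(deviation x0 d k) deviation_sum submxcolN submxcol_sum.
by congr (- _); apply: eq_bigr => s _; rewrite submxcol_mul_mxcol.
Qed.

Lemma decoupledP (i j : 'I_N) : gamma i != 0 ->
  disturbance_decoupled P r gamma i j <-> forall m, submxblock (Wmx ^+ m) j i = 0.
Proof.
move=> gamma_i_neq0; split => [decoupled m | block_eq0 x0 d d_on_i k]; last first.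
  apply/eqP; rewrite -subr_eq0 deviation_block big1 ?oppr0 // => s _.
  apply: big1 => l _; have [->|neq_li] := eqVneq l i; first by rewrite block_eq0 mul0mx.
  by rewrite d_on_i // scaler0 mulmx0.
apply/matrixP => a b.
(* [submxblock 1 l i] transports the unit vector e_b of player i to block l,
   and is zero unless l = i. *)
pose impulse s l : 'cV[R]_(dims l) :=
  if s == 0%N then (gamma i)^-1 *: (submxblock 1 l i *m delta_mx b 0) else 0.
have impulse_on_i : supported_on i impulse.
  by move=> s l neq_li; rewrite /impulse submxblock1_neq // mul0mx scaler0 if_same.
have unscaled l : gamma l *: impulse 0%N l = submxblock 1 l i *m delta_mx b 0.
  have [->|neq_li] := eqVneq l i; first by rewrite scalerA mulfV // scale1r.
  by rewrite /impulse submxblock1_neq // mul0mx !scaler0.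
have := decoupled (fun _ => 0) impulse impulse_on_i m.+1.
move/eqP; rewrite -subr_eq0 deviation_block oppr_eq0 big_ord_recl /=.
rewrite [X in _ + X]big1 ?addr0; last first.
  by move=> s _; apply: big1 => l _; rewrite /impulse /= scaler0 mulmx0.
under eq_bigr do rewrite unscaled mulmxA.
rewrite -mulmx_suml -submxblock_mul mulmx1 subn1 /= => /eqP /matrixP /(_ a 0).
by rewrite -colE !mxE.
Qed.

End Game.

Theorem theorem1 (R : realFieldType) (N : nat) (dims : 'I_N -> nat)
  (P : forall l m : 'I_N, 'M[R]_(dims l, dims m))
  (r : forall l : 'I_N, 'cV[R]_(dims l)) (gamma : 'I_N -> R)
  (HPsym : forall l, (P l l)^T = P l l)
  (Hgamma : forall l, 0 < gamma l)
  (i j : 'I_N) (Hji : j != i) :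
  disturbance_decoupled P r gamma i j <->
  (forall k : nat, (0 < k < \sum_(l < N) dims l)%N ->
     \sum_(t : (k.-1).-tuple 'I_N | path (edge P gamma) i (rcons t j))
        pathW P gamma j i t = 0).
Proof.
apply: (iff_trans (decoupledP P r j (lt0r_neq0 (Hgamma i)))).
split => [blocks_eq0 k /andP[k_gt0 _] | paths_eq0].
  by rewrite -Wmx_exp_block_paths prednK.
apply: submxblock_exp_eq0 => // k /andP[k_gt0 lt_k_n].
by rewrite -(prednK k_gt0) Wmx_exp_block_paths paths_eq0 // k_gt0.
Qed.
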